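(* Let $k$ be an odd integer with $k\ge 5$, let $D$ be a strong $k$-quasi-transitive digraph with $\mathrm{diam}(D)\ge k+2$, let $u,v\in V(D)$ with $d(u,v)=k+2$, and let $P=x_0x_1\ldots x_{k+2}$ be a shortest $(u,v)$-path with $x_0=u$, $x_{k+2}=v$. Suppose $D[V(P)]$ is a semicomplete digraph. Then for any $x\in V(D)\setminus V(P)$ and $x_i\in V(P)$: if $x\rightarrow x_i$, then $x$ is adjacent to every vertex of $\{x_0,x_1,\ldots,x_{i-1}\}$; if $x_i\rightarrow x$, then $x$ is adjacent to every vertex of $\{x_{i+1},x_{i+2},\ldots,x_{k+2}\}$.
   Context: All digraphs are finite, without loops or multiple arcs (opposite arcs allowed). $x\rightarrow y$ means $xy\in A(D)$; $x,y$ are adjacent if $x\rightarrow y$ or $y\rightarrow x$. For $k\ge 2$, $D$ is $k$-quasi-transitive if for every path $x_0x_1\ldots x_k$ of length $k$, $x_0$ and $x_k$ are adjacent. $d(x,y)$ is the length of a shortest $(x,y)$-path, $\mathrm{diam}(D)=\max_{x,y}d(x,y)$. $D[S]$ is the induced subdigraph. A semicomplete digraph: every two distinct vertices adjacent. *)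

From mathcomp Require Import all_boot.
Set Implicit Arguments. Unset Strict Implicit. Unset Printing Implicit Defensive.

(* A digraph on a finite vertex type T is given by its arc relation
   [arc : rel T]; [arc x y] means x -> y.  Loops are excluded by a separate
   irreflexivity hypothesis; opposite arcs are allowed. *)
Section Digraph.
Variables (T : finType) (arc : rel T).

Definition adj (x y : T) : bool := arc x y || arc y x.

(* A (directed) path: a nonempty sequence of pairwise distinct vertices,
   consecutive ones joined by arcs.  Its length is [size s - 1]. *)
Definition is_dpath (s : seq T) : bool :=
  if s is a :: s' then path arc a s' && uniq s else false.

Definition dpath_from (u v : T) (s : seq T) : bool :=
  [&& is_dpath s, nth u s 0 == u & last u s == v].

Definition k_quasi_transitive (k : nat) : Prop :=
  forall (a : T) (s : seq T), is_dpath (a :: s) -> size s = k ->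
    adj a (last a s).

Definition strong : Prop :=
  forall u v : T, exists s : seq T, dpath_from u v s.

Definition dist_eq (u v : T) (n : nat) : Prop :=
  (exists s : seq T, dpath_from u v s && (size s == n.+1)) /\
  (forall s : seq T, dpath_from u v s -> n.+1 <= size s).

Definition diam_ge (n : nat) : Prop :=
  exists u v : T, (exists s, dpath_from u v s) /\
    (forall s : seq T, dpath_from u v s -> n.+1 <= size s).

End Digraph.

From mathcomp Require Import all_boot zify.

(* Because P is a shortest path there is no arc x_a -> x_c with c >= a + 2,
   so semicompleteness of D[V(P)] forces x_c -> x_a.  Together with the arcs
   x_a -> x_(a+1) of P this lets one go from any x_i to any x_j with j < i
   along exactly k - 1 arcs inside V(P) without repeating a vertex: climb
   along P in runs and jump back between runs, skipping three vertices.
   Prefixing an arc y -> x_i (resp. appending x_i -> y to the walk from x_j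
   to x_i) gives a path of length k from y to x_j (resp. from x_j to y), and
   k-quasi-transitivity makes y and x_j adjacent. *)

Lemma last_iotaS m n : last m (iota m.+1 n) = m + n.
Proof. by elim: n m => [|n IHn] m /=; rewrite ?addn0 ?IHn ?addnS. Qed.

Lemma path_iota (e : rel nat) m n :
  (forall t, m <= t < m + n -> e t t.+1) -> path e m (iota m.+1 n).
Proof.
elim: n m => [|n IHn] m e_succ //=.
rewrite e_succ ?leqnn ?addnS ?ltnS ?leq_addr //=.
by apply: IHn => t /andP[? ?]; apply: e_succ; lia.
Qed.

Definition geodesic_arc (a c : nat) : bool := (c == a.+1) || (c.+2 <= a).

Lemma geodesic_path_run m n rest :
  path geodesic_arc m (iota m.+1 n ++ rest) = path geodesic_arc (m + n) rest.
Proof.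
by rewrite cat_path last_iotaS path_iota // => t _; rewrite /geodesic_arc eqxx.
Qed.

Lemma geodesic_path_jump a s n rest : s.+2 <= a ->
  path geodesic_arc (s + n) rest -> path geodesic_arc a (iota s n.+1 ++ rest).
Proof.
by move=> s_lt_a; rewrite /= geodesic_path_run /geodesic_arc s_lt_a orbT.
Qed.

Section GeodesicWalk.
Context {k i j : nat}.
Hypotheses (k_ge3 : 3 <= k) (j_lt_i : j < i) (i_le : i <= k.+2).

Definition geodesic_walk (t : seq nat) : Prop :=
  [/\ size t = k.-1, last i t = j, uniq (i :: t), all (leq^~ k.+2) (i :: t)
    & path geodesic_arc i t].

(* Climb from i to i + p, jump down to j - q and climb back up to j. *)
Lemma geodesic_walk_near : i - j <= 4 -> exists t, geodesic_walk t.
Proof.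
move=> near; pose q := minn j k.-2; pose p := k.-2 - q.
exists (iota i.+1 p ++ iota (j - q) q.+1); split.
- by rewrite size_cat !size_iota; lia.
- by rewrite last_cat /= last_iotaS; lia.
- rewrite -cat_cons -[i :: _]/(iota i p.+1) cat_uniq !iota_uniq andbT.
  by apply/hasPn => a; rewrite !mem_iota; lia.
- rewrite -cat_cons -[i :: _]/(iota i p.+1) all_cat.
  by apply/andP; split; apply/allP => a; rewrite mem_iota; lia.
- rewrite geodesic_path_run -[iota _ _]cats0.
  by apply: geodesic_path_jump => //; lia.
Qed.

(* Climb from i to k + 2, jump down to j + 2, climb to i - 3, jump down to 0
   and climb up to j: only j + 1, i - 2 and i - 1 are skipped. *)
Lemma geodesic_walk_far : 5 <= i - j -> exists t, geodesic_walk t.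
Proof.
move=> far.
exists (iota i.+1 (k.+2 - i) ++ iota j.+2 (i - j - 4) ++ iota 0 j.+1); split.
- by rewrite !size_cat !size_iota; lia.
- by rewrite !last_cat /= !last_iotaS; lia.
- rewrite -cat_cons -[i :: _]/(iota i (k.+2 - i).+1) catA.
  rewrite cat_uniq cat_uniq !iota_uniq !(andbT, andTb).
  by apply/andP; split; apply/hasPn => a; rewrite ?mem_cat !mem_iota; lia.
- rewrite -cat_cons -[i :: _]/(iota i (k.+2 - i).+1) !all_cat.
  by apply/and3P; split; apply/allP => a; rewrite mem_iota; lia.
- have -> : i - j - 4 = (i - j - 5).+1 by lia.
  rewrite geodesic_path_run; apply: geodesic_path_jump; first by lia.
  by rewrite -[iota 0 _]cats0; apply: geodesic_path_jump => //; lia.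
Qed.

Lemma geodesic_walk_exists : exists t, geodesic_walk t.
Proof.
case: (leqP (i - j) 4); first exact: geodesic_walk_near.
exact: geodesic_walk_far.
Qed.

End GeodesicWalk.

Section DirectedPaths.
Variables (T : finType) (arc : rel T).

Lemma is_dpath_cons y a s :
  arc y a -> y \notin a :: s -> is_dpath arc (a :: s) ->
  is_dpath arc [:: y, a & s].
Proof.
move=> ya y_new /andP[pa ua].
by rewrite /is_dpath /= ya pa -/(uniq (a :: s)) ua y_new.
Qed.

Lemma is_dpath_rcons a s y :
  is_dpath arc (a :: s) -> arc (last a s) y -> y \notin a :: s ->
  is_dpath arc (a :: rcons s y).
Proof.
move=> /andP[pa ua] ay y_new.
by rewrite /is_dpath rcons_path pa ay -rcons_cons rcons_uniq y_new ua.
Qed.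

End DirectedPaths.

Section SemicompleteGeodesic.
Context {T : finType} {arc : rel T} {k : nat} {x : nat -> T}.
Hypothesis P_path : dpath_from arc (x 0) (x k.+2) (mkseq x k.+3).
Hypothesis P_shortest :
  forall s, dpath_from arc (x 0) (x k.+2) s -> k.+3 <= size s.
Hypothesis P_semicomplete :
  forall a c, a < k.+3 -> c < k.+3 -> a != c -> adj arc (x a) (x c).

Lemma arc_succ a : a < k.+2 -> arc (x a) (x a.+1).
Proof.
move=> a_lt; have /(pathP 0) : path (relpre x arc) 0 (iota 1 k.+2).
  by rewrite -path_map; case/and3P: P_path => /andP[].
move/(_ a); rewrite size_iota => /(_ a_lt).
by rewrite -/(iota 0 k.+3) !nth_iota //; lia.
Qed.

Lemma x_inj a b : a <= k.+2 -> b <= k.+2 -> x a = x b -> a = b.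
Proof.
move: P_path => /and3P[/andP[_ P_uniq] _ _] a_le b_le xab; apply/eqP.
by rewrite -(nth_uniq (x 0) _ _ P_uniq) ?size_mkseq // !nth_mkseq // xab.
Qed.

Lemma uniq_map_x t : all (leq^~ k.+2) t -> uniq t -> uniq (map x t).
Proof.
move=> /allP t_le; rewrite map_inj_in_uniq // => a b a_t b_t.
exact: x_inj (t_le a a_t) (t_le b b_t).
Qed.

Lemma path_x_iota m l : m + l <= k.+2 -> path arc (x m) (map x (iota m.+1 l)).
Proof.
move=> ml_le; rewrite path_map.
by apply: path_iota => t ?; apply: arc_succ; lia.
Qed.

Context {y : T}.
Hypothesis y_off : y \notin mkseq x k.+3.

Lemma notin_map_x t : all (leq^~ k.+2) t -> y \notin map x t.
Proof.
move=> /allP t_le; apply: contra y_off => /mapP[a a_t ->].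
by apply: map_f; rewrite mem_iota; have := t_le a a_t; lia.
Qed.

Lemma no_shortcut a c : a.+2 <= c -> c <= k.+2 -> ~~ arc (x a) (x c).
Proof.
move=> a_lt c_le; apply/negP => ac.
pose s := iota 0 a.+1 ++ iota c (k.+2 - c).+1.
have s_le : all (leq^~ k.+2) s.
  by rewrite all_cat; apply/andP; split; apply/allP => b; rewrite mem_iota; lia.
suff /P_shortest : dpath_from arc (x 0) (x k.+2) (map x s).
  by rewrite size_map size_cat !size_iota; lia.
apply/and3P; split=> //; last first.
  by rewrite last_map last_cat /= last_iotaS subnKC.
apply/andP; split; last first.
  rewrite uniq_map_x // cat_uniq !iota_uniq andbT.
  by apply/hasPn => b; rewrite !mem_iota; lia.
change (path arc (x 0) (map x (iota 1 a ++ c :: iota c.+1 (k.+2 - c)))).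
by rewrite map_cat cat_path last_map last_iotaS /= ac !path_x_iota //; lia.
Qed.

Lemma arc_of_geodesic_arc a c :
  a <= k.+2 -> c <= k.+2 -> geodesic_arc a c -> arc (x a) (x c).
Proof.
move=> a_le c_le /orP[/eqP c_eq | c_lt].
  by rewrite c_eq arc_succ // -c_eq.
have /orP[// | ca] : adj arc (x a) (x c) by apply: P_semicomplete => //; lia.
by case/negP: (no_shortcut c a c_lt a_le).
Qed.

Lemma dpath_of_geodesic_path h t :
  all (leq^~ k.+2) (h :: t) -> uniq (h :: t) -> path geodesic_arc h t ->
  is_dpath arc (map x (h :: t)).
Proof.
move=> ht_le ht_uniq ht_path; apply/andP; split; last exact: uniq_map_x.
rewrite path_map; apply: (sub_in_path (P := leq^~ k.+2)) ht_le ht_path.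
exact: arc_of_geodesic_arc.
Qed.

Hypothesis k_ge3 : 3 <= k.
Hypothesis quasi_transitive : k_quasi_transitive arc k.

Lemma adj_earlier_of_arc_to i j :
  i <= k.+2 -> arc y (x i) -> j < i -> adj arc y (x j).
Proof.
move=> i_le yi j_lt.
have [t [size_t last_t uniq_t t_le path_t]] :=
  geodesic_walk_exists k_ge3 j_lt i_le.
have walk : is_dpath arc (map x (i :: t)) by apply: dpath_of_geodesic_path.
have /quasi_transitive : is_dpath arc (y :: map x (i :: t)).
  exact: is_dpath_cons yi (notin_map_x (i :: t) t_le) walk.
by rewrite size_map /= size_t last_map last_t; apply; lia.
Qed.

Lemma adj_later_of_arc_from i j :
  i < j -> j <= k.+2 -> arc (x i) y -> adj arc y (x j).
Proof.
move=> i_lt j_le iy.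
have [t [size_t last_t uniq_t t_le path_t]] :=
  geodesic_walk_exists k_ge3 i_lt j_le.
have walk : is_dpath arc (map x (j :: t)) by apply: dpath_of_geodesic_path.
have /quasi_transitive : is_dpath arc (x j :: rcons (map x t) y).
  apply: is_dpath_rcons walk _ (notin_map_x (j :: t) t_le).
  by rewrite last_map last_t.
by rewrite size_rcons size_map size_t last_rcons /adj orbC; apply; lia.
Qed.

End SemicompleteGeodesic.

Theorem lemma2p7 (T : finType) (arc : rel T) (k : nat) (u v : T) (x : nat -> T) :
  irreflexive arc ->
  odd k -> 5 <= k ->
  strong arc -> k_quasi_transitive arc k ->
  diam_ge arc k.+2 ->
  dist_eq arc u v k.+2 ->
  (* P = x_0 x_1 ... x_{k+2} is a shortest (u,v)-path *)
  x 0 = u -> x k.+2 = v ->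
  dpath_from arc u v (mkseq x k.+3) ->
  (* D[V(P)] is semicomplete *)
  (forall i j, i < k.+3 -> j < k.+3 -> i != j -> adj arc (x i) (x j)) ->
  forall y : T, y \notin mkseq x k.+3 ->
  forall i, i < k.+3 ->
    (arc y (x i) -> forall j, j < i -> adj arc y (x j)) /\
    (arc (x i) y -> forall j, i < j -> j < k.+3 -> adj arc y (x j)).
Proof.
move=> _ _ k_ge5 _ quasi_transitive _ [_ shortest] x0 xk P semicomplete.
move=> y y_off i i_le; subst u v; have k_ge3 : 3 <= k by apply: leq_trans k_ge5.
have adj_earlier := adj_earlier_of_arc_to P shortest semicomplete y_off k_ge3.
have adj_later := adj_later_of_arc_from P shortest semicomplete y_off k_ge3.
split=> [yi j j_lt | iy j i_lt j_le].
- exact: (adj_earlier quasi_transitive i j i_le yi j_lt).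
- exact: (adj_later quasi_transitive i j i_lt j_le iy).
Qed.
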